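(* Let $E$ be a pseudo effect algebra satisfying (RDP) and let $d:E\to\mathbb R$ be a subadditive mapping. Assume that for every $x\in E$ the set $$D(x):=\{d(x_1)+\cdots+d(x_n):\ x=x_1+\cdots+x_n,\ x_1,\ldots,x_n\in E,\ n\ge 1\}$$ is bounded above in $\mathbb R$. Then the mapping $m:E\to\mathbb R$ given by $m(x)=\sup D(x)$ is a signed measure on $E$.
   Context: A pseudo effect algebra is a partial algebra $(E;+,0,1)$ with a partial binary operation $+$ such that for all $a,b,c\in E$: (i) $a+b$ and $(a+b)+c$ exist iff $b+c$ and $a+(b+c)$ exist, and then $(a+b)+c=a+(b+c)$; (ii) there is exactly one $d$ and exactly one $e$ with $a+d=e+a=1$; (iii) if $a+b$ exists, there are $d,e\in E$ with $a+b=d+a=b+e$; (iv) if $1+a$ or $a+1$ exists then $a=0$. The order is $a\le b$ iff $a+c=b$ for some $c$. $E$ satisfies the Riesz Decomposition Property (RDP) if whenever $a_1+a_2=b_1+b_2$ there are $d_1,d_2,d_3,d_4\in E$ with $d_1+d_2=a_1$, $d_3+d_4=a_2$, $d_1+d_3=b_1$, $d_2+d_4=b_2$. A mapping $d:E\to\mathbb R$ is subadditive if $d(0)=0$ and $d(x+y)\le d(x)+d(y)$ whenever $x+y$ is defined. A signed measure on $E$ is a map $m:E\to\mathbb R$ with $m(a+b)=m(a)+m(b)$ whenever $a+b$ is defined. *)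

From Stdlib Require Import Reals List.
Open Scope R_scope.

(* Partial binary operation encoded as pl : E -> E -> option E;
   pl a b = Some s means "a + b is defined and equals s". *)
Definition obind {E : Type} (f : E -> option E) (o : option E) : option E :=
  match o with Some x => f x | None => None end.

Definition is_PEA {E : Type} (pl : E -> E -> option E) (zero one : E) : Prop :=
  (* (i): (a+b)+c defined iff a+(b+c) defined, and then they are equal *)
  (forall a b c : E,
      obind (fun ab => pl ab c) (pl a b) = obind (fun bc => pl a bc) (pl b c)) /\
  (forall a : E, (exists! d, pl a d = Some one) /\ (exists! e, pl e a = Some one)) /\
  (forall a b s : E, pl a b = Some s ->
      exists d e, pl d a = Some s /\ pl b e = Some s) /\
  (forall a : E, ((exists s, pl one a = Some s) \/ (exists s, pl a one = Some s)) ->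
      a = zero).

Definition RDP {E : Type} (pl : E -> E -> option E) : Prop :=
  forall a1 a2 b1 b2 s : E, pl a1 a2 = Some s -> pl b1 b2 = Some s ->
    exists d1 d2 d3 d4 : E,
      pl d1 d2 = Some a1 /\ pl d3 d4 = Some a2 /\
      pl d1 d3 = Some b1 /\ pl d2 d4 = Some b2.

Definition subadditive {E : Type} (pl : E -> E -> option E) (zero : E) (d : E -> R) : Prop :=
  d zero = 0 /\ forall x y s : E, pl x y = Some s -> d s <= d x + d y.

Definition signed_measure {E : Type} (pl : E -> E -> option E) (m : E -> R) : Prop :=
  forall a b s : E, pl a b = Some s -> m s = m a + m b.

(* n-ary sum x1 + (x2 + (... + xn)) of the nonempty list x1 :: l (n >= 1) *)
Fixpoint psum {E : Type} (pl : E -> E -> option E) (x1 : E) (l : list E) : option E :=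
  match l with
  | nil => Some x1
  | y :: l' => obind (fun s => pl x1 s) (psum pl y l')
  end.

Definition Dset {E : Type} (pl : E -> E -> option E) (d : E -> R) (x : E) : R -> Prop :=
  fun r => exists (x1 : E) (l : list E),
    psum pl x1 l = Some x /\ r = d x1 + fold_right Rplus 0 (map d l).

(* Concatenating decompositions of a and b gives one of a + b, so m(a) + m(b) <= m(a + b).
   Conversely, by RDP every decomposition of a + b refines into decompositions of a and of b,
   and subadditivity makes the refined sums dominate the original one, so m(a + b) <= m(a) + m(b). *)
From Stdlib Require Import Reals List Lra.
Open Scope R_scope.

Lemma is_lub_add_le (A B C : R -> Prop) (ma mb mc : R) :
  is_lub A ma -> is_lub B mb -> is_lub C mc ->
  (forall ra rb, A ra -> B rb -> C (ra + rb)) ->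
  ma + mb <= mc.
Proof.
  intros [_ Hma] [_ Hmb] [Hmc _] HABC.
  assert (HB : is_upper_bound B (mc - ma)).
  { intros rb Hrb.
    assert (ma <= mc - rb).
    { apply Hma. intros ra Hra. pose proof (Hmc _ (HABC ra rb Hra Hrb)). lra. }
    lra. }
  pose proof (Hmb _ HB). lra.
Qed.

Lemma is_lub_le_add (A B C : R -> Prop) (ma mb mc : R) :
  is_lub A ma -> is_lub B mb -> is_lub C mc ->
  (forall r, C r -> exists ra rb, A ra /\ B rb /\ r <= ra + rb) ->
  mc <= ma + mb.
Proof.
  intros [Hma _] [Hmb _] [_ Hmc] HCAB.
  apply Hmc. intros r Hr.
  destruct (HCAB r Hr) as (ra & rb & Hra & Hrb & Hle).
  pose proof (Hma _ Hra). pose proof (Hmb _ Hrb). lra.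
Qed.

Lemma fold_right_Rplus_map_app (E : Type) (d : E -> R) (la lb : list E) :
  fold_right Rplus 0 (map d (la ++ lb)) =
  fold_right Rplus 0 (map d la) + fold_right Rplus 0 (map d lb).
Proof. induction la as [|x la IH]; simpl; [lra | rewrite IH; lra]. Qed.

Section Decompositions.

Variables (E : Type) (pl : E -> E -> option E) (d : E -> R).

Hypothesis Hassoc : forall a b c : E,
  obind (fun ab => pl ab c) (pl a b) = obind (fun bc => pl a bc) (pl b c).

Lemma psum_app :
  forall la a1 a b1 lb b s, psum pl a1 la = Some a -> psum pl b1 lb = Some b ->
    pl a b = Some s -> psum pl a1 (la ++ b1 :: lb) = Some s.
Proof.
  induction la as [|y la IH]; intros a1 a b1 lb b s Ha Hb Hs; simpl in *.
  - injection Ha as <-. rewrite Hb. exact Hs.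
  - destruct (psum pl y la) as [t|] eqn:Ht; simpl in Ha; [|discriminate].
    pose proof (Hassoc a1 t b) as Hat. rewrite Ha in Hat. simpl in Hat. rewrite Hs in Hat.
    destruct (pl t b) as [u|] eqn:Hu; simpl in Hat; [|discriminate].
    rewrite (IH y t b1 lb b u Ht Hb Hu). symmetry. exact Hat.
Qed.

Lemma Dset_add (a b s : E) (ra rb : R) :
  pl a b = Some s -> Dset pl d a ra -> Dset pl d b rb -> Dset pl d s (ra + rb).
Proof.
  intros Hs (a1 & la & Ha & ->) (b1 & lb & Hb & ->).
  exists a1, (la ++ b1 :: lb). split.
  - exact (psum_app la a1 a b1 lb b s Ha Hb Hs).
  - rewrite fold_right_Rplus_map_app. simpl. lra.
Qed.

Lemma Dset_refine_RDP (HRDP : RDP pl)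
  (Hsub : forall x y s : E, pl x y = Some s -> d s <= d x + d y) :
  forall (l : list E) (x1 a b s : E), psum pl x1 l = Some s -> pl a b = Some s ->
  exists ra rb, Dset pl d a ra /\ Dset pl d b rb /\
    d x1 + fold_right Rplus 0 (map d l) <= ra + rb.
Proof.
  induction l as [|y l IH]; intros x1 a b s Hx Hab; simpl in Hx.
  - injection Hx as ->.
    exists (d a), (d b). repeat split.
    + exists a, nil. simpl. split; [reflexivity | lra].
    + exists b, nil. simpl. split; [reflexivity | lra].
    + simpl. pose proof (Hsub _ _ _ Hab). lra.
  - destruct (psum pl y l) as [t|] eqn:Ht; simpl in Hx; [|discriminate].
    (* Refine x1 + t = a + b into a = d1 + d2, b = d3 + d4, x1 = d1 + d3, t = d2 + d4. *)
    destruct (HRDP a b x1 t s Hab Hx) as (d1 & d2 & d3 & d4 & H12 & H34 & H13 & H24).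
    destruct (IH y d2 d4 t Ht H24)
      as (r2 & r4 & (a2 & la & Ha2 & ->) & (b4 & lb & Hb4 & ->) & Hle).
    exists (d d1 + (d a2 + fold_right Rplus 0 (map d la))),
           (d d3 + (d b4 + fold_right Rplus 0 (map d lb))).
    repeat split.
    + exists d1, (a2 :: la). simpl. rewrite Ha2. split; [exact H12 | reflexivity].
    + exists d3, (b4 :: lb). simpl. rewrite Hb4. split; [exact H34 | reflexivity].
    + simpl. pose proof (Hsub _ _ _ H13). lra.
Qed.

End Decompositions.

Theorem proposition3p1 (E : Type) (pl : E -> E -> option E) (zero one : E)
  (d : E -> R) (m : E -> R) :
  is_PEA pl zero one ->
  RDP pl ->
  subadditive pl zero d ->
  (forall x : E, bound (Dset pl d x)) ->
  (forall x : E, is_lub (Dset pl d x) (m x)) ->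
  signed_measure pl m.
Proof.
  (* Boundedness is implied by the existence of the least upper bounds m x. *)
  intros [Hassoc _] HRDP [_ Hsub] _ Hlub a b s Hs.
  apply Rle_antisym.
  - apply (is_lub_le_add _ _ _ _ _ _ (Hlub a) (Hlub b) (Hlub s)).
    intros r (x1 & l & Hx & ->).
    exact (Dset_refine_RDP E pl d HRDP Hsub l x1 a b s Hx Hs).
  - apply (is_lub_add_le _ _ _ _ _ _ (Hlub a) (Hlub b) (Hlub s)).
    intros ra rb. exact (Dset_add E pl d Hassoc a b s ra rb Hs).
Qed.
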